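(* Let $\mathbb{X},\mathbb{Y}$ be finite-dimensional real inner product spaces, $S\subseteq\mathbb{Y}$ a closed set and $\Upsilon:\mathbb{X}\to\mathbb{Y}$ a twice differentiable mapping. Let $\overline{x}\in\Upsilon^{-1}(S)$ and $d\in\mathbb{X}$. Suppose that the multifunction $\mathcal{F}(z):=\Upsilon(z)-S$ is metrically subregular at $\overline{x}$ for the origin in direction $d$, and that $S$ is outer second-order regular (respectively, second-order regular) at $\Upsilon(\overline{x})$ in the direction $\Upsilon'(\overline{x})d\in\mathcal{T}_S(\Upsilon(\overline{x}))$. Then $\Upsilon^{-1}(S)$ is outer second-order regular (respectively, second-order regular) at $\overline{x}$ in the direction $d$.
   Context: For a closed set $C$ in a finite-dimensional space, $x\in C$ and a direction $d$: the (Bouligand) tangent cone is $\mathcal{T}_C(x)=\{d\mid \exists t_k\downarrow0,\ d^k\to d \text{ with } x+t_kd^k\in C\}$; the outer second-order tangent set is $\mathcal{T}^2_C(x;d)=\{w\mid \exists t_k\downarrow 0 \text{ with } \mathrm{dist}(x+t_kd+\tfrac12t_k^2w,C)=o(t_k^2)\}$; the inner second-order tangent set is $\mathcal{T}^{i,2}_C(x;d)=\{w\mid \mathrm{dist}(x+td+\tfrac12t^2w,C)=o(t^2)\text{ as } t\downarrow0\}$. $C$ is outer second-order regular at $x$ in the direction $d\in\mathcal{T}_C(x)$ if for every sequence $x+t_kd+\tfrac12t_k^2w^k\in C$ with $t_k\downarrow0$ and $t_kw^k\to0$ one has $\mathrm{dist}(w^k,\mathcal{T}^2_C(x;d))\to0$;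 $C$ is second-order regular at $x$ in the direction $d$ if in addition $\mathcal{T}^2_C(x;d)=\mathcal{T}^{i,2}_C(x;d)$. For a mapping $\Upsilon$ and closed $S$, $\mathcal{F}(z)=\Upsilon(z)-S$ is (metrically) subregular at $\overline{x}$ for the origin in direction $d$ if there are $\kappa,\rho,\delta>0$ such that $\mathrm{dist}(x,\mathcal{F}^{-1}(0))\le\kappa\,\mathrm{dist}(\Upsilon(x),S)$ for all $x\in\overline{x}+V_{\rho,\delta}$, where $V_{\rho,\delta}=\{w\mid \|w\|\le\rho,\ \|\,\|d\|w-\|w\|d\,\|\le\delta\|w\|\|d\|\}$; for $d=0$ this is ordinary metric subregularity. *)

From Stdlib Require Import Reals.
From mathcomp Require Import ssreflect ssrfun ssrbool eqtype ssrnat seq fintype bigop.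
Open Scope R_scope.

(* A finite-dimensional real inner product space is modelled (up to isometry) by R^n
   with the Euclidean inner product. *)
Definition vec (n : nat) := 'I_n -> R.
Definition vadd {n} (x y : vec n) : vec n := fun i => x i + y i.
Definition vsub {n} (x y : vec n) : vec n := fun i => x i - y i.
Definition vscale {n} (a : R) (x : vec n) : vec n := fun i => a * x i.
Definition vzero (n : nat) : vec n := fun _ => 0.
Definition inner {n} (x y : vec n) : R := \big[Rplus/0]_(i < n) (x i * y i).
Definition norm {n} (x : vec n) : R := sqrt (inner x x).

(* dist(y, C) <= r, i.e. inf_{c in C} ||y - c|| <= r  (false if C is empty: dist = +oo) *)
Definition dist_le {n} (y : vec n) (C : vec n -> Prop) (r : R) : Prop :=
  forall eps, 0 < eps -> exists c, C c /\ norm (vsub y c) < r + eps.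

Definition closed_vset {n} (C : vec n -> Prop) : Prop :=
  forall x, (forall eps, 0 < eps -> exists c, C c /\ norm (vsub x c) < eps) -> C x.

Definition null_pos_seq (t : nat -> R) : Prop :=
  (forall k, 0 < t k) /\
  (forall eps, 0 < eps -> exists K, forall k, (K <= k)%nat -> Rabs (t k) < eps).

Definition vec_cv {n} (u : nat -> vec n) (v : vec n) : Prop :=
  forall eps, 0 < eps -> exists K, forall k, (K <= k)%nat -> norm (vsub (u k) v) < eps.

Definition tangent_cone {n} (C : vec n -> Prop) (x d : vec n) : Prop :=
  exists (t : nat -> R) (u : nat -> vec n),
    null_pos_seq t /\ vec_cv u d /\ forall k, C (vadd x (vscale (t k) (u k))).

Definition so_point {n} (x : vec n) (t : R) (d w : vec n) : vec n :=
  vadd (vadd x (vscale t d)) (vscale (/ 2 * t ^ 2) w).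

Definition outer_so_tangent {n} (C : vec n -> Prop) (x d : vec n) (w : vec n) : Prop :=
  exists t : nat -> R, null_pos_seq t /\
    forall eps, 0 < eps -> exists K, forall k, (K <= k)%nat ->
      dist_le (so_point x (t k) d w) C (eps * (t k) ^ 2).

Definition inner_so_tangent {n} (C : vec n -> Prop) (x d : vec n) (w : vec n) : Prop :=
  forall eps, 0 < eps -> exists del, 0 < del /\
    forall t, 0 < t < del -> dist_le (so_point x t d w) C (eps * t ^ 2).

Definition outer_so_regular {n} (C : vec n -> Prop) (x d : vec n) : Prop :=
  tangent_cone C x d /\
  forall (t : nat -> R) (w : nat -> vec n),
    null_pos_seq t ->
    (forall k, C (so_point x (t k) d (w k))) ->
    vec_cv (fun k => vscale (t k) (w k)) (vzero n) ->
    forall eps, 0 < eps -> exists K, forall k, (K <= k)%nat ->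
      dist_le (w k) (outer_so_tangent C x d) eps.

Definition so_regular {n} (C : vec n -> Prop) (x d : vec n) : Prop :=
  outer_so_regular C x d /\
  forall w, outer_so_tangent C x d w <-> inner_so_tangent C x d w.

Definition linear_map {n m} (L : vec n -> vec m) : Prop :=
  forall a b x y i, L (vadd (vscale a x) (vscale b y)) i = a * L x i + b * L y i.

Definition is_frechet_deriv {n m} (F : vec n -> vec m) (x : vec n) (L : vec n -> vec m) : Prop :=
  linear_map L /\
  forall eps, 0 < eps -> exists del, 0 < del /\ forall h, norm h < del ->
    norm (vsub (vsub (F (vadd x h)) (F x)) (L h)) <= eps * norm h.

Definition bilinear_map {n m} (B : vec n -> vec n -> vec m) : Prop :=
  (forall h, linear_map (B h)) /\ (forall v, linear_map (fun h => B h v)).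

(* Fréchet derivative of x |-> D x (a linear-map-valued function) at x, w.r.t. the
   operator norm: B is the second derivative. *)
Definition is_frechet_deriv2 {n m} (D : vec n -> vec n -> vec m) (x : vec n)
    (B : vec n -> vec n -> vec m) : Prop :=
  bilinear_map B /\
  forall eps, 0 < eps -> exists del, 0 < del /\ forall h v, norm h < del ->
    norm (vsub (vsub (D (vadd x h) v) (D x v)) (B h v)) <= eps * norm h * norm v.

Definition twice_differentiable_with {n m} (F : vec n -> vec m) (D : vec n -> vec n -> vec m) : Prop :=
  forall x, is_frechet_deriv F x (D x) /\ exists B, is_frechet_deriv2 D x B.

Definition preimage {n m} (F : vec n -> vec m) (S : vec m -> Prop) : vec n -> Prop :=
  fun x => S (F x).

Definition dir_nbhd {n} (d : vec n) (rho del : R) (w : vec n) : Prop :=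
  norm w <= rho /\
  norm (vsub (vscale (norm d) w) (vscale (norm w) d)) <= del * norm w * norm d.

Definition metric_subregular_dir {n m} (Ups : vec n -> vec m) (S : vec m -> Prop)
    (xbar d : vec n) : Prop :=
  exists kappa rho del, 0 < kappa /\ 0 < rho /\ 0 < del /\
    forall w, dir_nbhd d rho del w ->
      forall r, 0 <= r -> dist_le (Ups (vadd xbar w)) S r ->
        dist_le (vadd xbar w) (preimage Ups S) (kappa * r).

(* Along the curves [x + s d + s^2/2 w] a second-order Taylor expansion gives, uniformly as [s w -> 0],
     Ups (x + s d + s^2/2 w) = Ups x + s Ups'(x) d + s^2/2 (Ups'(x) w + Ups''(x)[d,d]) + o(s^2),
   so second-order points of [Ups^-1 S] are mapped to second-order points of [S] by the affine map
   [w |-> Ups'(x) w + Ups''(x)[d,d]].  Conversely, for fixed [w] these curves enter the directional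
   neighbourhood [x + V_{rho,delta}], where subregularity gives [dist(., Ups^-1 S) <= kappa dist(Ups ., S)];
   pulling near points back and extracting a convergent subsequence of their second-order coordinates yields
     dist(w, T^2_{Ups^-1 S}(x;d)) <= kappa dist(Ups'(x) w + Ups''(x)[d,d], T^2_S(Ups x; Ups'(x) d)).
   Outer second-order regularity of [S], as well as the equality of its inner and outer second-order
   tangent sets, transfers to the preimage through these two facts. *)

From HB Require Import structures.
From Stdlib Require Import Reals Lra Psatz ClassicalEpsilon FunctionalExtensionality.
From mathcomp Require Import ssreflect ssrfun ssrbool eqtype ssrnat seq fintype bigop.
Open Scope R_scope.
Set Implicit Arguments.

Lemma RplusA : associative Rplus. Proof. by move=> *; ring. Qed.
HB.instance Definition _ := Monoid.isComLaw.Build R 0 Rplus RplusA Rplus_comm Rplus_0_l.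

Notation Rsum n F := (\big[Rplus/0]_(i < n) F i).

Lemma Rsum_le n (F G : 'I_n -> R) : (forall i, F i <= G i) -> Rsum n F <= Rsum n G.
Proof. by move=> H; apply: (big_ind2 (fun a b => a <= b)) => //; [lra | move=> *; lra]. Qed.

Lemma Rsum_ge0 n (F : 'I_n -> R) : (forall i, 0 <= F i) -> 0 <= Rsum n F.
Proof. by move=> H; apply: (big_ind (fun a => 0 <= a)) => //; [lra | move=> *; lra]. Qed.

Lemma Rsum_scal n a (F : 'I_n -> R) : Rsum n (fun i => a * F i) = a * Rsum n F.
Proof. by apply: (big_ind2 (fun x y => x = a * y)) => //; [ring | move=> ? ? ? ? -> ->; ring]. Qed.

Lemma Rsum_abs_le n (F : 'I_n -> R) : Rabs (Rsum n F) <= Rsum n (fun i => Rabs (F i)).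
Proof.
apply: (big_ind2 (fun x y => Rabs x <= y)) => //; first by rewrite Rabs_R0; lra.
- by move=> ? ? ? ? ? ?; apply: Rle_trans (Rabs_triang _ _) _; lra.
- by move=> *; lra.
Qed.

Lemma Rsum_le_const n (F : 'I_n -> R) c : (forall i, F i <= c) -> Rsum n F <= INR n * c.
Proof.
elim: n F => [|n IH] F H; first by rewrite big_ord0 /=; lra.
rewrite big_ord_recr S_INR.
have := IH (fun i => F (widen_ord (leqnSn n) i)) (fun i => H _); have := H ord_max.
by rewrite Rmult_plus_distr_r Rmult_1_l => H1 H2; apply: Rplus_le_compat.
Qed.

Lemma Rsum_term_le n (F : 'I_n -> R) j : (forall i, 0 <= F i) -> F j <= Rsum n F.
Proof.
move=> H; rewrite (bigD1 j) //= -{1}(Rplus_0_r (F j)); apply: Rplus_le_compat_l.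
by apply: (big_ind (fun a => 0 <= a)) => //; [lra | move=> *; lra].
Qed.

Lemma vec_ext n (x y : vec n) : (forall i, x i = y i) -> x = y.
Proof. exact: functional_extensionality. Qed.

Lemma inner_sym n (x y : vec n) : inner x y = inner y x.
Proof. by rewrite /inner; apply: eq_bigr => i _; ring. Qed.

Lemma inner_addl n (x y z : vec n) : inner (vadd x y) z = inner x z + inner y z.
Proof. by rewrite /inner -big_split /=; apply: eq_bigr => i _; rewrite /vadd; ring. Qed.

Lemma inner_scalel n a (x z : vec n) : inner (vscale a x) z = a * inner x z.
Proof. by rewrite /inner -Rsum_scal; apply: eq_bigr => i _; rewrite /vscale; ring. Qed.

Lemma inner_addr n (x y z : vec n) : inner z (vadd x y) = inner z x + inner z y.
Proof. by rewrite inner_sym inner_addl !(inner_sym z). Qed.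

Lemma inner_scaler n a (x z : vec n) : inner z (vscale a x) = a * inner z x.
Proof. by rewrite inner_sym inner_scalel (inner_sym z). Qed.

Lemma inner_self_ge0 n (x : vec n) : 0 <= inner x x.
Proof. by apply: Rsum_ge0 => i; nra. Qed.

Lemma norm_ge0 n (x : vec n) : 0 <= norm x.
Proof. exact: sqrt_pos. Qed.

Lemma norm_sqr n (x : vec n) : norm x * norm x = inner x x.
Proof. exact/sqrt_sqrt/inner_self_ge0. Qed.

Lemma norm_scale n a (x : vec n) : norm (vscale a x) = Rabs a * norm x.
Proof.
rewrite /norm inner_scalel inner_scaler -Rmult_assoc sqrt_mult; last exact: inner_self_ge0.
- by rewrite sqrt_Rsqr_abs.
- by nra.
Qed.

Lemma cauchy_schwarz n (x y : vec n) : Rabs (inner x y) <= norm x * norm y.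
Proof.
(* [|s x + t y|^2 >= 0] at [(s, t) = (<y,y>, -<x,y>), (<x,y>, -<x,x>), (1, -<x,y>)] *)
have Hq s t : 0 <= s * s * inner x x + 2 * s * t * inner x y + t * t * inner y y.
  have := inner_self_ge0 (vadd (vscale s x) (vscale t y)).
  by rewrite !inner_addl !inner_addr !inner_scalel !inner_scaler (inner_sym y x); lra.
suff H : inner x y * inner x y <= inner x x * inner y y.
  apply: Rsqr_incr_0_var; last exact: Rmult_le_pos (norm_ge0 _) (norm_ge0 _).
  rewrite /Rsqr -Rabs_mult Rabs_pos_eq; first by have := norm_sqr x; have := norm_sqr y; nra.
  by nra.
have := Hq (inner y y) (- inner x y); have := Hq (inner x y) (- inner x x).
have := Hq 1 (- inner x y); have := inner_self_ge0 x; have := inner_self_ge0 y.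
move: (inner x x) (inner x y) (inner y y) => a b c *.
have [Ha|Ha] : a = 0 \/ 0 < a by lra.
- have [Hc|Hc] : c = 0 \/ 0 < c by lra.
  + by subst; nra.
  + by nra.
- by nra.
Qed.

Lemma norm_add_le n (x y : vec n) : norm (vadd x y) <= norm x + norm y.
Proof.
have := cauchy_schwarz x y; have := norm_sqr (vadd x y).
rewrite inner_addl !inner_addr (inner_sym y x) -norm_sqr -(norm_sqr y).
have := norm_ge0 x; have := norm_ge0 y; have := norm_ge0 (vadd x y).
by have := Rle_abs (inner x y); nra.
Qed.

Lemma vsub0 n (x : vec n) : vsub x (vzero n) = x.
Proof. by apply: vec_ext => i; rewrite /vsub /vzero; ring. Qed.

Lemma norm_opp n (x : vec n) : norm (vscale (-1) x) = norm x.
Proof. by rewrite norm_scale Rabs_Ropp Rabs_R1 Rmult_1_l. Qed.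

Lemma norm_vsubC n (x y : vec n) : norm (vsub x y) = norm (vsub y x).
Proof.
have -> : vsub y x = vscale (-1) (vsub x y) by apply: vec_ext => i; rewrite /vsub /vscale; ring.
by rewrite norm_opp.
Qed.

Lemma norm_vsub_triang n (x y z : vec n) : norm (vsub x z) <= norm (vsub x y) + norm (vsub y z).
Proof.
have -> : vsub x z = vadd (vsub x y) (vsub y z) by apply: vec_ext => i; rewrite /vsub /vadd; ring.
exact: norm_add_le.
Qed.

Lemma norm_vsub_le n (x y : vec n) : norm (vsub x y) <= norm x + norm y.
Proof. by have := norm_vsub_triang x (vzero n) y; rewrite vsub0 (norm_vsubC (vzero n)) vsub0. Qed.

Lemma norm_coord_le n (x : vec n) i : Rabs (x i) <= norm x.
Proof.
rewrite -sqrt_Rsqr_abs /norm; apply: sqrt_le_1_alt.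
by apply: (Rsum_term_le (fun j => x j * x j)) => j; nra.
Qed.

Lemma norm_le_sum_abs n (x : vec n) : norm x <= Rsum n (fun i => Rabs (x i)).
Proof.
have [Hs H] : 0 <= Rsum n (fun i => Rabs (x i)) /\
    inner x x <= Rsum n (fun i => Rabs (x i)) * Rsum n (fun i => Rabs (x i)).
  apply: (big_ind2 (fun a b => 0 <= b /\ a <= b * b)) => //; first lra.
  - by move=> a1 b1 a2 b2 [? ?] [? ?]; nra.
  - move=> i _; split; first exact: Rabs_pos.
    by rewrite -Rabs_mult Rabs_pos_eq; nra.
by rewrite /norm -(sqrt_square (Rsum n (fun i => Rabs (x i)))) //; apply: sqrt_le_1_alt.
Qed.

Lemma norm_le_coord_bound n (x : vec n) c : (forall i, Rabs (x i) <= c) -> norm x <= INR n * c.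
Proof. by move=> H; apply: Rle_trans (norm_le_sum_abs x) _; apply: Rsum_le_const. Qed.

Section LinearBounds.
Variables n m : nat.

Lemma linear_scale (L : vec n -> vec m) a x i : linear_map L -> L (vscale a x) i = a * L x i.
Proof.
move=> HL; have -> : vscale a x = vadd (vscale a x) (vscale 0 x).
  by apply: vec_ext => j; rewrite /vadd /vscale; ring.
by rewrite HL; ring.
Qed.

Lemma linear_sub (L : vec n -> vec m) x y i : linear_map L -> L (vsub x y) i = L x i - L y i.
Proof.
move=> HL; have -> : vsub x y = vadd (vscale 1 x) (vscale (-1) y).
  by apply: vec_ext => j; rewrite /vsub /vadd /vscale; ring.
by rewrite HL; ring.
Qed.

Lemma linear_zero (L : vec n -> vec m) i : linear_map L -> L (vzero n) i = 0.
Proof.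
move=> HL; have -> : vzero n = vscale 0 (vzero n) by apply: vec_ext => j; rewrite /vscale /vzero; ring.
by rewrite linear_scale //; ring.
Qed.

Definition unit_vec (j : 'I_n) : vec n := fun i => if i == j then 1 else 0.

Lemma linear_coord (L : vec n -> vec m) h i : linear_map L ->
  L h i = Rsum n (fun j => h j * L (unit_vec j) i).
Proof.
move=> HL.
have Eh : h = (fun k => \big[Rplus/0]_(j <- index_enum 'I_n) (h j * unit_vec j k)).
  apply: vec_ext => k; rewrite (bigD1 k) //= big1 /unit_vec ?eqxx; first ring.
  by move=> j Hj; rewrite eq_sym (negbTE Hj); ring.
rewrite {1}Eh; elim: (index_enum _) => [|j r IH].
- have -> : (fun k => \big[Rplus/0]_(j <- [::]) (h j * unit_vec j k)) = vzero n.
    by apply: vec_ext => k; rewrite big_nil.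
  by rewrite big_nil linear_zero.
- rewrite big_cons -IH.
  have -> : (fun k => \big[Rplus/0]_(j0 <- j :: r) (h j0 * unit_vec j0 k)) =
      vadd (vscale (h j) (unit_vec j)) (vscale 1 (fun k => \big[Rplus/0]_(j0 <- r) (h j0 * unit_vec j0 k))).
    by apply: vec_ext => k; rewrite big_cons /vadd /vscale; ring.
  by rewrite HL; ring.
Qed.

Definition linear_bound (L : vec n -> vec m) : R :=
  INR m * Rsum n (fun j => norm (L (unit_vec j))).

Lemma linear_bound_ge0 (L : vec n -> vec m) : 0 <= linear_bound L.
Proof. by apply: Rmult_le_pos; [exact: pos_INR | apply: Rsum_ge0 => j; exact: norm_ge0]. Qed.

Lemma norm_linear_le (L : vec n -> vec m) h : linear_map L ->
  norm (L h) <= linear_bound L * norm h.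
Proof.
move=> HL; rewrite /linear_bound Rmult_assoc; apply: norm_le_coord_bound => i.
rewrite linear_coord //; apply: Rle_trans (Rsum_abs_le _) _.
rewrite Rmult_comm -Rsum_scal; apply: Rsum_le => j; rewrite Rabs_mult.
by apply: Rmult_le_compat; try exact: Rabs_pos; exact: norm_coord_le.
Qed.

Definition bilinear_bound (B : vec n -> vec n -> vec m) : R :=
  INR m * Rsum n (fun j => linear_bound (B (unit_vec j))).

Lemma bilinear_bound_ge0 (B : vec n -> vec n -> vec m) : 0 <= bilinear_bound B.
Proof. by apply: Rmult_le_pos; [exact: pos_INR | apply: Rsum_ge0 => j; exact: linear_bound_ge0]. Qed.

Lemma norm_bilinear_le (B : vec n -> vec n -> vec m) h v : bilinear_map B ->
  norm (B h v) <= bilinear_bound B * norm h * norm v.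
Proof.
move=> [HB1 HB2]; rewrite /bilinear_bound !Rmult_assoc; apply: norm_le_coord_bound => i.
rewrite (linear_coord _ _ (HB2 v)); apply: Rle_trans (Rsum_abs_le _) _.
rewrite Rmult_comm -Rsum_scal; apply: Rsum_le => j; rewrite Rabs_mult.
have H1 := norm_coord_le h j.
have H2 : Rabs (B (unit_vec j) v i) <= linear_bound (B (unit_vec j)) * norm v.
  by apply: Rle_trans (norm_coord_le _ i) _; exact: norm_linear_le.
have := linear_bound_ge0 (B (unit_vec j)); have := norm_ge0 v; have := Rabs_pos (h j).
by have := Rabs_pos (B (unit_vec j) v i); nra.
Qed.

End LinearBounds.

Lemma Rmult_lt_of_lt_div a b c : 0 < c -> a < b / c -> a * c < b.
Proof.
move=> Hc H; have := Rmult_lt_compat_r c _ _ Hc H.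
by rewrite /Rdiv Rmult_assoc Rinv_l; lra.
Qed.

Lemma derivable_pt_lim_quadratic a b c :
  derivable_pt_lim (fun s => s * a + / 2 * s ^ 2 * b) c (a + c * b).
Proof.
have H := derivable_pt_lim_plus _ _ c _ _ (derivable_pt_lim_scal _ a c _ (derivable_pt_lim_id c))
   (derivable_pt_lim_scal _ (/ 2 * b) c _ (derivable_pt_lim_pow c 2)).
have -> : a + c * b = a * 1 + / 2 * b * (INR 2 * c ^ Init.Nat.pred 2) by simpl; field.
by apply: derivable_pt_lim_ext H => z; rewrite /plus_fct /mult_real_fct /Ranalysis1.id; ring.
Qed.

Lemma derivable_pt_lim_line n m (F : vec n -> vec m) y0 h c L i :
  is_frechet_deriv F (vadd y0 (vscale c h)) L ->
  derivable_pt_lim (fun s => F (vadd y0 (vscale s h)) i) c (L h i).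
Proof.
move=> [HL HF] eps Heps.
have Hh1 : 0 < norm h + 1 by have := norm_ge0 h; lra.
have [del [Hdel Hd]] := HF _ (Rdiv_lt_0_compat _ _ Heps Hh1).
exists (mkposreal _ (Rdiv_lt_0_compat _ _ Hdel Hh1)) => t Ht0 /= Ht.
have Hta : 0 < Rabs t by apply: Rabs_pos_lt.
have Hth := Rmult_lt_of_lt_div Hh1 Ht.
have := Hd (vscale t h); rewrite norm_scale.
have -> : vadd (vadd y0 (vscale c h)) (vscale t h) = vadd y0 (vscale (c + t) h).
  by apply: vec_ext => j; rewrite /vadd /vscale; ring.
move/(_ ltac:(have := norm_ge0 h; nra))/(Rle_trans _ _ _ (norm_coord_le _ i)).
rewrite /vsub linear_scale //.
set q := _ - _ - _ => Hq.
have -> : (F (vadd y0 (vscale (c + t) h)) i - F (vadd y0 (vscale c h)) i) / t - L h i = q / t.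
  by rewrite /q; field; move=> E; rewrite E Rabs_R0 in Hta; lra.
rewrite /Rdiv Rabs_mult Rabs_inv; apply/(Rmult_lt_reg_r (Rabs t)) => //.
rewrite Rmult_assoc Rinv_l; last lra.
have : eps / (norm h + 1) * norm h < eps / (norm h + 1) * (norm h + 1).
  by apply: Rmult_lt_compat_l; [apply: Rdiv_lt_0_compat | lra].
have -> : eps / (norm h + 1) * (norm h + 1) = eps by field; lra.
by nra.
Qed.

Lemma taylor2 n m (F : vec n -> vec m) D x B :
  (forall y, is_frechet_deriv F y (D y)) -> is_frechet_deriv2 D x B ->
  forall eps, 0 < eps -> exists del, 0 < del /\ forall h, norm h < del ->
  norm (vsub (vsub (vsub (F (vadd x h)) (F x)) (D x h)) (vscale (/ 2) (B h h)))
    <= eps * (norm h * norm h).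
Proof.
move=> HD [[_ HBl] HB] eps Heps.
have Hm := pos_INR m.
have [del [Hdel Hd]] := HB (eps / (INR m + 1)) ltac:(apply: Rdiv_lt_0_compat; lra).
exists del; split => // h Hh.
have Hnh := norm_ge0 h.
apply: (Rle_trans _ (INR m * (eps / (INR m + 1) * (norm h * norm h)))); last first.
  have -> : INR m * (eps / (INR m + 1) * (norm h * norm h)) =
      (eps - eps / (INR m + 1)) * (norm h * norm h) by field; lra.
  have : 0 < eps / (INR m + 1) by apply: Rdiv_lt_0_compat; lra.
  by nra.
apply: norm_le_coord_bound => i.
pose g s := F (vadd x (vscale s h)) i - (s * D x h i + / 2 * s ^ 2 * B h h i).
pose g' c := D (vadd x (vscale c h)) h i - (D x h i + c * B h h i).
have [c [Hg Hc]] : exists c, g 1 - g 0 = g' c * (1 - 0) /\ 0 < c < 1.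
  apply: MVT_cor2 => [|c _]; first lra.
  exact: (derivable_pt_lim_minus _ _ _ _ _ (@derivable_pt_lim_line _ _ F x h c _ i (HD _)) (derivable_pt_lim_quadratic _ _ _)).
have -> : vsub (vsub (vsub (F (vadd x h)) (F x)) (D x h)) (vscale (/ 2) (B h h)) i = g 1 - g 0.
  have E1 : vadd x (vscale 1 h) = vadd x h by apply: vec_ext => j; rewrite /vadd /vscale; ring.
  have E0 : vadd x (vscale 0 h) = x by apply: vec_ext => j; rewrite /vadd /vscale; ring.
  by rewrite /g E1 E0 /vsub /vscale; ring.
have -> : g 1 - g 0 = vsub (vsub (D (vadd x (vscale c h)) h) (D x h)) (B (vscale c h) h) i.
  by rewrite Hg /g' /vsub (linear_scale (L := fun u => B u h)) //; ring.
have Hch : norm (vscale c h) <= norm h by rewrite norm_scale Rabs_pos_eq; nra.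
apply: Rle_trans (norm_coord_le _ _) _; apply: Rle_trans (Hd (vscale c h) h ltac:(lra)) _.
rewrite Rmult_assoc; apply: Rmult_le_compat_l; last exact: Rmult_le_compat_r.
by apply: Rlt_le; apply: Rdiv_lt_0_compat; lra.
Qed.

Lemma inv_succ_pos k : 0 < / (INR k + 1).
Proof. by apply: Rinv_0_lt_compat; have := pos_INR k; lra. Qed.

Lemma inv_succ_le1 k : / (INR k + 1) <= 1.
Proof. by rewrite -Rinv_1; apply: Rinv_le_contravar; [lra | have := pos_INR k; lra]. Qed.

Lemma inv_succ_antimono {j k} : (j <= k)%nat -> / (INR k + 1) <= / (INR j + 1).
Proof.
move=> /leP/le_INR Hjk; apply: Rinv_le_contravar; last lra.
by have := pos_INR j; lra.
Qed.

Lemma eventually_inv_succ_lt eps : 0 < eps ->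
  exists K, forall k, (K <= k)%nat -> / (INR k + 1) < eps.
Proof.
move=> He; have [N [HN HN0]] := archimed_cor1 _ He.
exists N => k Hk; apply: Rle_lt_trans _ HN.
by apply: Rle_trans (inv_succ_antimono Hk) _; apply: Rinv_le_contravar; [exact: lt_0_INR | lra].
Qed.

Lemma null_pos_seq_inv_succ : null_pos_seq (fun k => / (INR k + 1)).
Proof.
split => [k|eps He]; first exact: inv_succ_pos.
have [K HK] := eventually_inv_succ_lt He; exists K => k Hk.
by rewrite Rabs_pos_eq; [exact: HK | exact: Rlt_le (inv_succ_pos k)].
Qed.

Lemma null_pos_seq_subseq {t phi} : null_pos_seq t -> (forall k, (k <= phi k)%nat) ->
  null_pos_seq (fun k => t (phi k)).
Proof.
move=> [Ht0 Ht] Hphi; split => [k|eps He]; first exact: Ht0.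
by have [K HK] := Ht _ He; exists K => k Hk; apply: HK; apply: leq_trans Hk (Hphi k).
Qed.

Lemma null_pos_seq_lt t del : null_pos_seq t -> 0 < del ->
  exists K, forall k, (K <= k)%nat -> t k < del.
Proof.
move=> [Ht0 Ht] Hd; have [K HK] := Ht _ Hd; exists K => k Hk.
by have := HK _ Hk; rewrite Rabs_pos_eq; [lra | exact: Rlt_le (Ht0 k)].
Qed.

Lemma eventually_choice (P : nat -> nat -> Prop) :
  (forall j, exists K, forall k, (K <= k)%nat -> P j k) ->
  exists phi : nat -> nat, (forall j, (j <= phi j)%nat) /\ forall j, P j (phi j).
Proof.
move=> /choice [K HK]; exists (fun j => maxn j (K j)); split => j; first exact: leq_maxl.
by apply: HK; exact: leq_maxr.
Qed.

Lemma R_bolzano_weierstrass (a : nat -> R) M : (forall k, Rabs (a k) <= M) ->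
  exists phi : nat -> nat, (forall k, (phi k < phi k.+1)%nat) /\
    exists l, forall k, Rabs (a (phi k) - l) < / (INR k + 1).
Proof.
move=> HM.
have Hb k : - M <= a k <= M by have := HM k; have := Rle_abs (a k); have := Rle_abs (- a k); rewrite Rabs_Ropp; lra.
have [l Hl] := Bolzano_Weierstrass a _ (compact_P3 (- M) M) Hb.
have Hg : forall Nk : nat * nat, exists p, (Nk.1 <= p)%nat /\ Rabs (a p - l) < / (INR Nk.2 + 1).
  move=> [N k] /=.
  have Hn : neighbourhood (disc l (mkposreal _ (inv_succ_pos k))) l by exists (mkposreal _ (inv_succ_pos k)).
  by have [p [/leP Hp1 Hp2]] := Hl _ N Hn; exists p.
have [g Hg2] := choice _ Hg.
pose fix phi k := if k is k'.+1 then g ((phi k').+1, k) else g (0, 0)%nat.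
exists phi; split => [k|]; first exact: (proj1 (Hg2 ((phi k).+1, k.+1))).
by exists l => -[|k]; [exact: (proj2 (Hg2 (0, 0)%nat)) | exact: (proj2 (Hg2 ((phi k).+1, k.+1)))].
Qed.

Lemma vec_bolzano_weierstrass n (u : nat -> vec n) M : (forall k, norm (u k) <= M) ->
  exists phi : nat -> nat, (forall j, (j <= phi j)%nat) /\ exists l, vec_cv (fun j => u (phi j)) l.
Proof.
move=> HM.
have Hind k : exists phi : nat -> nat, (forall j, (j <= phi j)%nat) /\ exists l : vec n,
    forall eps, 0 < eps -> exists K, forall j, (K <= j)%nat -> forall i : 'I_n, (i < k)%nat ->
      Rabs (u (phi j) i - l i) < eps.
  elim: k => [|k [phi [Hphi [l Hl]]]].
    by exists id; split => //; exists (u 0%nat) => eps He; exists 0%nat.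
  case: (ltnP k n) => Hk; last first.
    exists phi; split => //; exists l => eps He; have [K HK] := Hl _ He.
    by exists K => j Hj i Hi; apply: HK => //; apply: leq_trans (ltn_ord i) Hk.
  pose ik : 'I_n := Ordinal Hk.
  have [psi [Hpsi [lk Hlk]]] := R_bolzano_weierstrass (fun j => u (phi j) ik)
    (fun j => Rle_trans _ _ _ (norm_coord_le _ _) (HM _)).
  have Hpsi' j : (j <= psi j)%nat by elim: j => [|j IH] //; apply: leq_ltn_trans IH (Hpsi j).
  exists (fun j => phi (psi j)); split; first by move=> j; exact: leq_trans (Hpsi' j) (Hphi _).
  exists (fun i => if i == ik then lk else l i) => eps He.
  have [K1 HK1] := Hl _ He; have [K2 HK2] := eventually_inv_succ_lt He.
  exists (maxn K1 K2) => j Hj i Hi.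
  case: (eqVneq i ik) => [->|Hik].
    by apply: Rlt_trans (Hlk j) (HK2 j (leq_trans (leq_maxr _ _) Hj)).
  apply: HK1; first exact: leq_trans (leq_trans (leq_maxl _ _) Hj) (Hpsi' j).
  move: Hi; rewrite ltnS leq_eqVlt => /orP [/eqP Hv|] //.
  by case/negP: Hik; apply/eqP/val_inj.
have [phi [Hphi [l Hl]]] := Hind n.
exists phi; split => //; exists l => eps He.
have Hn := pos_INR n.
have He1 : 0 < eps / (INR n + 1) by apply: Rdiv_lt_0_compat; lra.
have [K HK] := Hl _ He1; exists K => j Hj.
apply: (Rle_lt_trans _ (INR n * (eps / (INR n + 1)))).
  by apply: norm_le_coord_bound => i; apply: Rlt_le; exact: HK.
have -> : INR n * (eps / (INR n + 1)) = eps - eps / (INR n + 1) by field; lra.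
lra.
Qed.

Section Distance.
Context {n : nat} {C : vec n -> Prop}.

Lemma dist_le_mem {y c r} : C c -> norm (vsub y c) <= r -> dist_le y C r.
Proof. by move=> Hc Hr eps He; exists c; split => //; lra. Qed.

Lemma dist_le_trans {y y' r a} : dist_le y C r -> norm (vsub y' y) <= a -> dist_le y' C (r + a).
Proof.
move=> H Ha eps He; have [c [Hc Hn]] := H _ He; exists c; split => //.
by have := norm_vsub_triang y' y c; lra.
Qed.

Lemma dist_le_weaken {y r r'} : dist_le y C r -> r <= r' -> dist_le y C r'.
Proof. by move=> H Hr eps He; have [c [Hc Hn]] := H _ He; exists c; split => //; lra. Qed.

Lemma dist_le_approx {y r} : (forall eta, 0 < eta -> dist_le y C (r + eta)) -> dist_le y C r.
Proof.
move=> H eps He; have [c [Hc Hn]] := H (eps / 2) ltac:(lra) (eps / 2) ltac:(lra).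
by exists c; split => //; lra.
Qed.

End Distance.

Section SecondOrderPoints.
Variables (n : nat) (x d : vec n).

Lemma so_pointE s w : so_point x s d w = vadd x (vadd (vscale s d) (vscale (/ 2 * s ^ 2) w)).
Proof. by apply: vec_ext => i; rewrite /so_point /vadd /vscale; ring. Qed.

Lemma so_point0 s : so_point x s d (vzero n) = vadd x (vscale s d).
Proof. by apply: vec_ext => i; rewrite /so_point /vadd /vscale /vzero; ring. Qed.

Lemma norm_so_point_sub s w1 w2 :
  norm (vsub (so_point x s d w1) (so_point x s d w2)) = / 2 * s ^ 2 * norm (vsub w1 w2).
Proof.
have -> : vsub (so_point x s d w1) (so_point x s d w2) = vscale (/ 2 * s ^ 2) (vsub w1 w2).
  by apply: vec_ext => i; rewrite /so_point /vadd /vscale /vsub; ring.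
by rewrite norm_scale Rabs_pos_eq //; have := pow2_ge_0 s; lra.
Qed.

End SecondOrderPoints.

Definition so_coord n (x : vec n) s (d y : vec n) : vec n :=
  vscale (2 / s ^ 2) (vsub (vsub y x) (vscale s d)).

Lemma so_point_coord n (x : vec n) s d y : s <> 0 -> so_point x s d (so_coord x s d y) = y.
Proof. by move=> Hs; apply: vec_ext => i; rewrite /so_point /so_coord /vadd /vscale /vsub; field. Qed.

Lemma norm_cone_defect_le n (d v : vec n) s : 0 <= s ->
  norm (vsub (vscale (norm d) v) (vscale (norm v) d)) <= 2 * norm d * norm (vsub v (vscale s d)).
Proof.
move=> Hs.
have -> : vsub (vscale (norm d) v) (vscale (norm v) d) =
    vadd (vscale (norm d) (vsub v (vscale s d))) (vscale (s * norm d - norm v) d).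
  by apply: vec_ext => i; rewrite /vsub /vadd /vscale; ring.
apply: Rle_trans (norm_add_le _ _) _; rewrite !norm_scale Rabs_pos_eq; last exact: norm_ge0.
have : Rabs (s * norm d - norm v) <= norm (vsub v (vscale s d)).
  have := norm_vsub_triang v (vscale s d) (vzero n); have := norm_vsub_triang (vscale s d) v (vzero n).
  rewrite !vsub0 (norm_vsubC (vscale s d)) norm_scale (Rabs_pos_eq s) // => ? ?.
  by apply: Rabs_le; lra.
by have := norm_ge0 d; move=> ? ?; nra.
Qed.

(* Along [s |-> s d + s^2/2 w] the angle defect to [d] is [O(s^2)] while the length is of order [s],
   so the cone condition of [V_{rho,del}] holds for small [s]; the choice of [s1] covers [d = 0]. *)
Lemma dir_nbhd_so_curve n (d : vec n) rho del W : 0 < rho -> 0 < del -> 0 <= W ->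
  exists s0, 0 < s0 /\ forall s w, 0 < s < s0 -> norm w <= W ->
    dir_nbhd d rho del (vadd (vscale s d) (vscale (/ 2 * s ^ 2) w)).
Proof.
move=> Hrho Hdel HW.
have Hd := norm_ge0 d.
have [s1 [Hs1 Hs1d]] : exists s1, 0 < s1 /\ norm d * (s1 * W * (1 + del) - del * norm d) <= 0.
  have [Hd0|Hd0] : norm d = 0 \/ 0 < norm d by lra.
    by exists 1; rewrite Hd0; split; lra.
  have Hq : 0 < W * (1 + del) + 1 by nra.
  exists (del * norm d / (W * (1 + del) + 1)); split; first by apply: Rdiv_lt_0_compat; nra.
  have E : del * norm d / (W * (1 + del) + 1) * (W * (1 + del) + 1) = del * norm d by field; lra.
  have : 0 < del * norm d / (W * (1 + del) + 1) by apply: Rdiv_lt_0_compat; nra.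
  move: E; move: (del * norm d / (W * (1 + del) + 1)) => s1 *; nra.
exists (Rmin 1 (Rmin s1 (rho / (norm d + W + 1)))).
split; first by apply: Rmin_pos; [lra | apply: Rmin_pos => //; apply: Rdiv_lt_0_compat; lra].
move=> s w [Hs Hs0] Hw.
move: (Rmin_l 1 (Rmin s1 (rho / (norm d + W + 1)))) (Rmin_r 1 (Rmin s1 (rho / (norm d + W + 1))))
  (Rmin_l s1 (rho / (norm d + W + 1))) (Rmin_r s1 (rho / (norm d + W + 1))) => ? ? ? ?.
have Hsr : s * (norm d + W + 1) < rho by apply: Rmult_lt_of_lt_div; lra.
set a := / 2 * s ^ 2; set om := vadd (vscale s d) (vscale a w).
have Ha : 0 <= a <= s / 2 by rewrite /a; nra.
have Hdev : norm (vsub om (vscale s d)) <= a * W.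
  have -> : vsub om (vscale s d) = vscale a w by apply: vec_ext => i; rewrite /om /vsub /vadd /vscale; ring.
  by rewrite norm_scale Rabs_pos_eq; nra.
have Hsd : norm (vscale s d) = s * norm d by rewrite norm_scale Rabs_pos_eq; lra.
have := norm_vsub_triang om (vscale s d) (vzero n); have := norm_vsub_triang (vscale s d) om (vzero n).
rewrite !vsub0 Hsd (norm_vsubC (vscale s d)) => Hom_ge Hom_le.
split; first by nra.
apply: Rle_trans (norm_cone_defect_le d om (Rlt_le _ _ Hs)) _.
have ? : norm d * (s * W * (1 + del / 2) - del * norm d) <= 0.
  apply: Rle_trans Hs1d; apply: Rmult_le_compat_l => //.
  have ? : 0 <= (s1 - s) * W by apply: Rmult_le_pos; lra.
  have ? : 0 <= s * W by apply: Rmult_le_pos; lra.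
  by nra.
have ? : norm d * (a * W * (2 + del) - del * s * norm d) <= 0.
  have -> : a * W * (2 + del) = s * (s * W * (1 + del / 2)) by rewrite /a; field.
  by nra.
have ? : 2 * norm d * norm (vsub om (vscale s d)) <= 2 * norm d * (a * W) by apply: Rmult_le_compat_l; lra.
have ? : del * (s * norm d - a * W) * norm d <= del * norm om * norm d.
  by apply: Rmult_le_compat_r => //; apply: Rmult_le_compat_l; lra.
by nra.
Qed.

Lemma norm_bilinear_terms_le n m (B : vec n -> vec n -> vec m) d v : bilinear_map B ->
  norm v <= 1 ->
  / 4 * norm (vadd (B d v) (B v d)) + / 8 * norm (B v v) <= bilinear_bound B * (norm d + 1) * norm v.
Proof.
move=> HB Hv; have HCB := bilinear_bound_ge0 B; have Hv0 := norm_ge0 v; have Hd := norm_ge0 d.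
have H1 := norm_add_le (B d v) (B v d).
have H2 := norm_bilinear_le d v HB; have H3 := norm_bilinear_le v d HB.
have H4 := norm_bilinear_le v v HB.
have H5 : bilinear_bound B * norm v * norm v <= bilinear_bound B * norm v.
  by have := Rmult_le_pos _ _ HCB Hv0; nra.
have H6 : 0 <= bilinear_bound B * norm v * norm d by apply: Rmult_le_pos => //; apply: Rmult_le_pos.
have H7 : 0 <= bilinear_bound B * norm v by apply: Rmult_le_pos.
have -> : bilinear_bound B * (norm d + 1) * norm v =
  bilinear_bound B * norm v * norm d + bilinear_bound B * norm v by ring.
have : norm (B d v) <= bilinear_bound B * norm v * norm d by apply: Rle_trans H2 _; right; ring.
lra.
Qed.

Section SecondOrderExpansion.
Variables (n m : nat) (F : vec n -> vec m) (D : vec n -> vec n -> vec m) (x : vec n).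
Variable B : vec n -> vec n -> vec m.
Hypothesis HD : forall y, is_frechet_deriv F y (D y).
Hypothesis HB : is_frechet_deriv2 D x B.

Lemma so_point_image_remainder s d w :
  let h := vadd (vscale s d) (vscale (/ 2 * s ^ 2) w) in
  vsub (F (so_point x s d w)) (so_point (F x) s (D x d) (vadd (D x w) (B d d))) =
  vadd (vsub (vsub (vsub (F (vadd x h)) (F x)) (D x h)) (vscale (/ 2) (B h h)))
       (vadd (vscale (/ 4 * s ^ 2) (vadd (B d (vscale s w)) (B (vscale s w) d)))
             (vscale (/ 8 * s ^ 2) (B (vscale s w) (vscale s w)))).
Proof.
move=> h; have HDx := proj1 (HD x); have [[HBr HBl] _] := HB.
rewrite so_pointE -/h; apply: vec_ext => i.
have Bl u v1 v2 : B (vadd (vscale s v1) (vscale (/ 2 * s ^ 2) v2)) u i =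
    s * B v1 u i + / 2 * s ^ 2 * B v2 u i by rewrite (HBl u).
have Br u : B u h i = s * B u d i + / 2 * s ^ 2 * B u w i by rewrite /h (HBr u).
have Bs u v : B (vscale s u) v i = s * B u v i by rewrite (linear_scale (L := fun u => B u v)).
rewrite /vsub /vadd /vscale /so_point /vadd /vscale /h HDx Bl !Br !Bs !(linear_scale _ _ _ (HBr _)).
field.
Qed.

Lemma so_point_expansion d eps : 0 < eps -> exists del, 0 < del /\
  forall s w, 0 < s < del -> norm (vscale s w) < del ->
  norm (vsub (F (so_point x s d w)) (so_point (F x) s (D x d) (vadd (D x w) (B d d))))
    <= eps * s ^ 2.
Proof.
move=> Heps.
have Hd1 : 0 < norm d + 1 by have := norm_ge0 d; lra.
set CB := bilinear_bound B; have HCB : 0 <= CB := bilinear_bound_ge0 B.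
have HeT : 0 < eps / (3 * ((norm d + 1) * (norm d + 1))) by apply: Rdiv_lt_0_compat; nra.
have [dT [HdT HT]] := taylor2 HD HB HeT.
have HCd : 0 < CB * (norm d + 1) + 1 by nra.
have Heta : 0 < eps / (3 * (CB * (norm d + 1) + 1)) by apply: Rdiv_lt_0_compat; lra.
have HdT' : 0 < dT / (norm d + 1) by apply: Rdiv_lt_0_compat.
exists (Rmin (Rmin 1 (dT / (norm d + 1))) (eps / (3 * (CB * (norm d + 1) + 1)))).
split; first by repeat apply: Rmin_pos => //; lra.
move=> s w [Hs Hs'] Hsw.
move: (Rmin_l (Rmin 1 (dT / (norm d + 1))) (eps / (3 * (CB * (norm d + 1) + 1))))
  (Rmin_r (Rmin 1 (dT / (norm d + 1))) (eps / (3 * (CB * (norm d + 1) + 1))))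
  (Rmin_l 1 (dT / (norm d + 1))) (Rmin_r 1 (dT / (norm d + 1))) => ? ? ? ?.
set sw := vscale s w in Hsw *; have Hnsw := norm_ge0 sw.
set h := vadd (vscale s d) (vscale (/ 2 * s ^ 2) w).
have Hh : norm h <= s * (norm d + 1).
  apply: Rle_trans (norm_add_le _ _) _.
  rewrite !norm_scale (Rabs_pos_eq s); last lra.
  rewrite Rabs_pos_eq; last nra.
  have -> : / 2 * s ^ 2 * norm w = / 2 * s * norm sw by rewrite /sw norm_scale Rabs_pos_eq; [ring | lra].
  by nra.
have Hhd : norm h < dT by apply: Rle_lt_trans Hh (Rmult_lt_of_lt_div Hd1 _); lra.
rewrite so_point_image_remainder -/h -/sw.
apply: Rle_trans (norm_add_le _ _) _; apply: Rle_trans (Rplus_le_compat_l _ _ _ (norm_add_le _ _)) _.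
rewrite !norm_scale (Rabs_pos_eq (/ 4 * _)); last nra.
rewrite (Rabs_pos_eq (/ 8 * _)); last nra.
have Htaylor : eps / (3 * ((norm d + 1) * (norm d + 1))) * (norm h * norm h) <= eps / 3 * s ^ 2.
  have -> : eps / 3 * s ^ 2 = eps / (3 * ((norm d + 1) * (norm d + 1))) * (s * (norm d + 1) * (s * (norm d + 1))).
    by field; lra.
  by apply: Rmult_le_compat_l; [lra | have := norm_ge0 h; nra].
have Hbil : / 4 * norm (vadd (B d sw) (B sw d)) + / 8 * norm (B sw sw) <= eps / 3.
  have Hsw1 : norm sw <= 1 by lra.
  apply: Rle_trans (norm_bilinear_terms_le d sw (proj1 HB) Hsw1) _.
  have -> : eps / 3 = (CB * (norm d + 1) + 1) * (eps / (3 * (CB * (norm d + 1) + 1))) by field; lra.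
  by rewrite -/CB; apply: Rmult_le_compat; nra.
have := HT h Hhd; have : 0 <= s ^ 2 by nra.
by move=> ? ?; nra.
Qed.

Lemma so_point_expansion_seq d {t : nat -> R} {w : nat -> vec n} :
  null_pos_seq t -> vec_cv (fun k => vscale (t k) (w k)) (vzero n) ->
  forall eps, 0 < eps -> exists K, forall k, (K <= k)%nat ->
  norm (vsub (F (so_point x (t k) d (w k))) (so_point (F x) (t k) (D x d) (vadd (D x (w k)) (B d d))))
    <= eps * t k ^ 2.
Proof.
move=> Ht Htw eps Heps.
have [del [Hdel Hexp]] := so_point_expansion d Heps.
have [K1 HK1] := null_pos_seq_lt Ht Hdel; have [K2 HK2] := Htw _ Hdel.
exists (maxn K1 K2) => k Hk; apply: Hexp.
  by split; [exact: (proj1 Ht) | apply: HK1; exact: leq_trans (leq_maxl _ _) Hk].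
by rewrite -(vsub0 (vscale _ _)); apply: HK2; exact: leq_trans (leq_maxr _ _) Hk.
Qed.
End SecondOrderExpansion.

Lemma vec_cv_norm_le n (u : nat -> vec n) l M : vec_cv u l ->
  (forall eps, 0 < eps -> exists K, forall k, (K <= k)%nat -> norm (u k) <= M + eps) ->
  norm l <= M.
Proof.
move=> Hu HM; apply: Rnot_lt_le => Hlt.
have Heta : 0 < (norm l - M) / 2 by lra.
have [K1 HK1] := Hu _ Heta; have [K2 HK2] := HM _ Heta.
have H1 := HK1 _ (leq_maxl K1 K2); have H2 := HK2 _ (leq_maxr K1 K2).
have := norm_vsub_le (vsub (u (maxn K1 K2)) l) (u (maxn K1 K2)).
have -> : vsub (vsub (u (maxn K1 K2)) l) (u (maxn K1 K2)) = vscale (-1) l.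
  by apply: vec_ext => i; rewrite /vsub /vscale; ring.
by rewrite norm_opp => ?; lra.
Qed.

Section OuterSecondOrderTangent.
Context {n : nat} {C : vec n -> Prop} {x d : vec n}.

Lemma outer_so_tangent_lim (s : nat -> R) (u : nat -> vec n) l :
  null_pos_seq s -> vec_cv u l -> (forall k, C (so_point x (s k) d (u k))) ->
  outer_so_tangent C x d l.
Proof.
move=> Hs Hu HC; exists s; split => // eps He.
have [K HK] := Hu _ He; exists K => k Hk; apply: (dist_le_mem (HC k)).
rewrite norm_so_point_sub norm_vsubC.
by have := HK _ Hk; have := pow2_ge_0 (s k); have := norm_ge0 (vsub (u k) l); nra.
Qed.

(* The near points are pulled back to second-order coordinates within [2 M + o(1)] of [w];
   a cluster point of them is an outer second-order tangent vector. *)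
Lemma dist_le_outer_so_tangent (s : nat -> R) w M :
  null_pos_seq s -> 0 <= M ->
  (forall eps, 0 < eps -> exists K, forall k, (K <= k)%nat ->
     dist_le (so_point x (s k) d w) C ((M + eps) * s k ^ 2)) ->
  dist_le w (outer_so_tangent C x d) (2 * M).
Proof.
move=> Hs HM Hw.
have [phi [Hphi Hw']] := eventually_choice (fun j k => dist_le (so_point x (s k) d w) C
  ((M + / (INR j + 1)) * s k ^ 2)) (fun j => Hw _ (inv_succ_pos j)).
pose s' j := s (phi j).
have Hs' : null_pos_seq s' by exact: null_pos_seq_subseq.
have Hs'0 j : 0 < s' j := proj1 Hs' j.
have Hnear j : exists z, C z /\ norm (vsub (so_point x (s' j) d w) z) <= (M + 2 * / (INR j + 1)) * s' j ^ 2.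
  have Hpos : 0 < / (INR j + 1) * s' j ^ 2.
    by apply: Rmult_lt_0_compat; [exact: inv_succ_pos | apply: pow_lt].
  have [z [Hz Hnz]] := Hw' j _ Hpos; rewrite -/(s' j) in Hnz.
  by exists z; split => //; lra.
have [z Hz] := choice _ Hnear.
pose u j := so_coord x (s' j) d (z j).
have Hsu j : so_point x (s' j) d (u j) = z j by apply: so_point_coord; have := Hs'0 j; lra.
have Hu j : norm (vsub (u j) w) <= 2 * M + 4 * / (INR j + 1).
  have := proj2 (Hz j); rewrite -(Hsu j) norm_so_point_sub norm_vsubC => H.
  have Hs2 : 0 < / 2 * s' j ^ 2 by apply: Rmult_lt_0_compat; [lra | apply: pow_lt].
  by apply: (Rmult_le_reg_l _ _ _ Hs2); lra.
have [psi [Hpsi [l Hl]]] : exists psi : nat -> nat, (forall j, (j <= psi j)%nat) /\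
    exists l, vec_cv (fun j => u (psi j)) l.
  apply: (@vec_bolzano_weierstrass _ u (norm w + 2 * M + 4)) => j.
  have := norm_vsub_le (vsub (u j) w) (vscale (-1) w); rewrite norm_opp.
  have -> : vsub (vsub (u j) w) (vscale (-1) w) = u j by apply: vec_ext => i; rewrite /vsub /vscale; ring.
  by have := Hu j; have := inv_succ_le1 j; lra.
apply: (dist_le_mem (c := l)).
  by apply: (outer_so_tangent_lim (null_pos_seq_subseq Hs' Hpsi) Hl) => j; rewrite Hsu; exact: proj1 (Hz _).
rewrite norm_vsubC; apply: (vec_cv_norm_le (u := fun j => vsub (u (psi j)) w)).
  move=> eps He; have [K HK] := Hl _ He; exists K => k Hk.
  have -> : vsub (vsub (u (psi k)) w) (vsub l w) = vsub (u (psi k)) l by apply: vec_ext => i; rewrite /vsub; ring.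
  exact: HK.
move=> eps He; have [K HK] := eventually_inv_succ_lt (eps := eps / 4) ltac:(lra).
exists K => k Hk; apply: Rle_trans (Hu _) _.
by have := HK _ (leq_trans Hk (Hpsi k)); lra.
Qed.

End OuterSecondOrderTangent.

Lemma vec_cv_scale_null n {t : nat -> R} {u : nat -> vec n} M :
  null_pos_seq t -> (exists K, forall k, (K <= k)%nat -> norm (u k) <= M) ->
  vec_cv (fun k => vscale (t k) (u k)) (vzero n).
Proof.
move=> Ht [K1 HK1] eps He.
have HM1 : 0 < Rabs M + 1 by have := Rabs_pos M; lra.
have [K2 HK2] := null_pos_seq_lt Ht (Rdiv_lt_0_compat _ _ He HM1).
exists (maxn K1 K2) => k Hk; rewrite vsub0 norm_scale Rabs_pos_eq; last exact: Rlt_le (proj1 Ht k).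
have := Rmult_lt_of_lt_div HM1 (HK2 _ (leq_trans (leq_maxr _ _) Hk)).
have := HK1 _ (leq_trans (leq_maxl _ _) Hk); have := Rle_abs M; have := proj1 Ht k; have := norm_ge0 (u k).
by move=> ? ? ? ? ?; nra.
Qed.

Lemma vec_cv_scale_const n (t : nat -> R) (w : vec n) :
  null_pos_seq t -> vec_cv (fun k => vscale (t k) w) (vzero n).
Proof.
move=> Ht; apply: (@vec_cv_scale_null _ _ (fun=> w) (norm w) Ht).
by exists 0%nat => k _; exact: Rle_refl.
Qed.

Lemma vec_cv_add0 n (u v : nat -> vec n) :
  vec_cv u (vzero n) -> vec_cv v (vzero n) -> vec_cv (fun k => vadd (u k) (v k)) (vzero n).
Proof.
move=> Hu Hv eps He.
have [K1 HK1] := Hu (eps / 2) ltac:(lra); have [K2 HK2] := Hv (eps / 2) ltac:(lra).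
exists (maxn K1 K2) => k Hk; rewrite vsub0; apply: Rle_lt_trans (norm_add_le _ _) _.
have := HK1 _ (leq_trans (leq_maxl _ _) Hk); have := HK2 _ (leq_trans (leq_maxr _ _) Hk).
by rewrite !vsub0; lra.
Qed.

Lemma vec_cv_linear0 n m (L : vec n -> vec m) (u : nat -> vec n) : linear_map L ->
  vec_cv u (vzero n) -> vec_cv (fun k => L (u k)) (vzero m).
Proof.
move=> HL Hu eps He.
have HC1 : 0 < linear_bound L + 1 by have := linear_bound_ge0 L; lra.
have [K HK] := Hu _ (Rdiv_lt_0_compat _ _ He HC1).
exists K => k Hk; rewrite vsub0; apply: Rle_lt_trans (norm_linear_le _ HL) _.
have := Rmult_lt_of_lt_div HC1 (HK _ Hk); rewrite vsub0.
by have := linear_bound_ge0 L; have := norm_ge0 (u k); move=> ? ? ?; nra.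
Qed.

Lemma inner_so_tangent_outer n (C : vec n -> Prop) x d w :
  inner_so_tangent C x d w -> outer_so_tangent C x d w.
Proof.
move=> Hin; exists (fun k => / (INR k + 1)); split; first exact: null_pos_seq_inv_succ.
move=> eps He; have [del [Hdel Hd]] := Hin _ He.
have [K HK] := eventually_inv_succ_lt Hdel.
by exists K => k Hk; apply: Hd; split; [exact: inv_succ_pos | exact: HK].
Qed.

Section TangentCone.
Context {n : nat} {C : vec n -> Prop} {x d : vec n}.

Lemma tangent_cone_dist_le : tangent_cone C x d -> exists t, null_pos_seq t /\
  forall eps, 0 < eps -> exists K, forall k, (K <= k)%nat -> dist_le (vadd x (vscale (t k) d)) C (eps * t k).
Proof.
move=> [t [u [Ht [Hu HC]]]]; exists t; split => // eps He.
have [K HK] := Hu _ He; exists K => k Hk; apply: (dist_le_mem (HC k)).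
have -> : vsub (vadd x (vscale (t k) d)) (vadd x (vscale (t k) (u k))) = vscale (t k) (vsub d (u k)).
  by apply: vec_ext => i; rewrite /vsub /vadd /vscale; ring.
rewrite norm_scale norm_vsubC Rabs_pos_eq; last exact: Rlt_le (proj1 Ht k).
by have := HK _ Hk; have := proj1 Ht k; move=> ? ?; nra.
Qed.

Lemma tangent_cone_of_dist_le t : null_pos_seq t ->
  (forall eps, 0 < eps -> exists K, forall k, (K <= k)%nat -> dist_le (vadd x (vscale (t k) d)) C (eps * t k)) ->
  tangent_cone C x d.
Proof.
move=> Ht Hdist.
have [phi [Hphi Hphi']] := eventually_choice (fun j k => dist_le (vadd x (vscale (t k) d)) C
  (/ (INR j + 1) * t k)) (fun j => Hdist _ (inv_succ_pos j)).
pose t' j := t (phi j).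
have Ht' : null_pos_seq t' by exact: null_pos_seq_subseq.
have Ht'0 j : 0 < t' j := proj1 Ht' j.
have Hnear j : exists c, C c /\ norm (vsub (vadd x (vscale (t' j) d)) c) < 2 * / (INR j + 1) * t' j.
  have Hpos : 0 < / (INR j + 1) * t' j by apply: Rmult_lt_0_compat; [exact: inv_succ_pos | exact: Ht'0].
  have [c [Hc Hnc]] := Hphi' j _ Hpos; rewrite -/(t' j) in Hnc.
  by exists c; split => //; lra.
have [c Hc] := choice _ Hnear.
exists t', (fun j => vscale (/ t' j) (vsub (c j) x)); split => //; split.
- move=> eps He; have [K HK] := eventually_inv_succ_lt (eps := eps / 2) ltac:(lra).
  exists K => j Hj.
  have -> : vsub (vscale (/ t' j) (vsub (c j) x)) d =
      vscale (/ t' j) (vscale (-1) (vsub (vadd x (vscale (t' j) d)) (c j))).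
    by apply: vec_ext => i; rewrite /vsub /vscale /vadd; field; have := Ht'0 j; lra.
  rewrite norm_scale norm_opp Rabs_pos_eq; last exact/Rlt_le/Rinv_0_lt_compat/Ht'0.
  apply: (Rmult_lt_reg_l (t' j)) => //; rewrite -Rmult_assoc Rinv_r; last by have := Ht'0 j; lra.
  by have := proj2 (Hc j); have := HK _ Hj; have := Ht'0 j; move=> ? ? ?; nra.
- move=> j; have -> : vadd x (vscale (t' j) (vscale (/ t' j) (vsub (c j) x))) = c j.
    by apply: vec_ext => i; rewrite /vadd /vscale /vsub; field; have := Ht'0 j; lra.
  exact: proj1 (Hc j).
Qed.

End TangentCone.

(* Directional subregularity restricted to the curves [x + s d + s^2/2 w], each of which lies in
   [x + V_{rho,delta}] for small [s]. *)
Definition subregular_along_so_curves n m (Ups : vec n -> vec m) (S : vec m -> Prop)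
    (x d : vec n) (kappa : R) : Prop :=
  forall w, exists s0, 0 < s0 /\ forall s, 0 < s < s0 -> forall r, 0 <= r ->
    dist_le (Ups (so_point x s d w)) S r -> dist_le (so_point x s d w) (preimage Ups S) (kappa * r).

Lemma metric_subregular_dir_so_curves n m (Ups : vec n -> vec m) S x d :
  metric_subregular_dir Ups S x d ->
  exists kappa, 0 < kappa /\ subregular_along_so_curves Ups S x d kappa.
Proof.
move=> [kappa [rho [del [Hk [Hr [Hd H]]]]]]; exists kappa; split => // w.
have [s0 [Hs0 Hs]] := dir_nbhd_so_curve d Hr Hd (norm_ge0 w).
exists s0; split => // s Hs' r Hr0; rewrite so_pointE; apply: H => //.
exact: Hs (Rle_refl _).
Qed.

Section Preimage.
Context {n m : nat} {Ups : vec n -> vec m} {D : vec n -> vec n -> vec m} {S : vec m -> Prop}.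
Context {x d : vec n} {B : vec n -> vec n -> vec m} {kappa : R}.
Hypothesis HD : forall y, is_frechet_deriv Ups y (D y).
Hypothesis HB : is_frechet_deriv2 D x B.
Hypothesis Hkappa : 0 < kappa.
Hypothesis HSR : subregular_along_so_curves Ups S x d kappa.

Lemma tangent_cone_preimage :
  tangent_cone S (Ups x) (D x d) -> tangent_cone (preimage Ups S) x d.
Proof.
move=> /tangent_cone_dist_le [t [Ht Hdist]]; apply: (tangent_cone_of_dist_le Ht) => eps Heps.
have [s0 [Hs0 Hsr]] := HSR (vzero n).
have Hd1 : 0 < norm d + 1 by have := norm_ge0 d; lra.
have He : 0 < eps / (2 * kappa) by apply: Rdiv_lt_0_compat; lra.
have [K1 HK1] := Hdist _ He.
have [del [Hdel Hfr]] := proj2 (HD x) _ (Rdiv_lt_0_compat _ _ He Hd1).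
have [K2 HK2] := null_pos_seq_lt Ht (Rmin_pos _ _ Hs0 (Rdiv_lt_0_compat _ _ Hdel Hd1)).
exists (maxn K1 K2) => k Hk.
have Htk := proj1 Ht k.
have Htk' := HK2 _ (leq_trans (leq_maxr _ _) Hk).
have Htd := Rmult_lt_of_lt_div Hd1 (Rlt_le_trans _ _ _ Htk' (Rmin_r _ _)).
have Hnear : norm (vsub (Ups (vadd x (vscale (t k) d))) (vadd (Ups x) (vscale (t k) (D x d))))
    <= eps / (2 * kappa) * t k.
  have Htd' : norm (vscale (t k) d) < del by rewrite norm_scale Rabs_pos_eq; nra.
  have := Hfr _ Htd'; rewrite norm_scale Rabs_pos_eq; last lra.
  have -> : vsub (vsub (Ups (vadd x (vscale (t k) d))) (Ups x)) (D x (vscale (t k) d)) =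
      vsub (Ups (vadd x (vscale (t k) d))) (vadd (Ups x) (vscale (t k) (D x d))).
    by apply: vec_ext => i; rewrite /vsub /vadd /vscale linear_scale //; [ring | exact: proj1 (HD x)].
  move=> H; apply: Rle_trans H _.
  have -> : eps / (2 * kappa) * t k = eps / (2 * kappa) / (norm d + 1) * (t k * (norm d + 1)) by field; lra.
  by apply: Rmult_le_compat_l; [apply: Rlt_le; exact: Rdiv_lt_0_compat | have := norm_ge0 d; nra].
have HS := dist_le_trans (HK1 _ (leq_trans (leq_maxl _ _) Hk)) Hnear.
rewrite -so_point0 in HS *.
apply: dist_le_weaken (Hsr _ _ _ _ HS) _.
- by split => //; apply: Rlt_le_trans Htk' (Rmin_l _ _).
- by apply: Rlt_le; nra.
- by apply: Req_le; field; lra.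
Qed.

Lemma dist_outer_so_tangent_preimage_le w r : 0 <= r ->
  dist_le (vadd (D x w) (B d d)) (outer_so_tangent S (Ups x) (D x d)) r ->
  dist_le w (outer_so_tangent (preimage Ups S) x d) (kappa * r).
Proof.
move=> Hr Hdist; apply: dist_le_approx => eta Heta.
have Heta' : 0 < eta / kappa by apply: Rdiv_lt_0_compat.
have [v [[s [Hs Hv]] Huv]] := Hdist _ Heta'.
have -> : kappa * r + eta = 2 * (kappa * (r + eta / kappa) / 2) by field; lra.
apply: (dist_le_outer_so_tangent Hs) => [|eps Heps]; first by nra.
have [s0 [Hs0 Hsr]] := HSR w.
have He : 0 < eps / (2 * kappa) by apply: Rdiv_lt_0_compat; lra.
have [K1 HK1] := Hv _ He.
have [K2 HK2] := so_point_expansion_seq HD HB d Hs (vec_cv_scale_const w Hs) He.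
have [K3 HK3] := null_pos_seq_lt Hs Hs0.
exists (maxn K1 (maxn K2 K3)) => k Hk.
have Hk1 : (K1 <= k)%nat by apply: leq_trans (leq_maxl _ _) Hk.
have Hk2 : (K2 <= k)%nat by apply: leq_trans (leq_trans (leq_maxl _ _) (leq_maxr _ _)) Hk.
have Hk3 : (K3 <= k)%nat by apply: leq_trans (leq_trans (leq_maxr _ _) (leq_maxr _ _)) Hk.
have Hsk := proj1 Hs k; have Hs2 : 0 < s k ^ 2 by apply: pow_lt.
have Hnear : norm (vsub (Ups (so_point x (s k) d w)) (so_point (Ups x) (s k) (D x d) v))
    <= eps / (2 * kappa) * s k ^ 2 + / 2 * s k ^ 2 * (r + eta / kappa).
  apply: Rle_trans (norm_vsub_triang _ (so_point (Ups x) (s k) (D x d) (vadd (D x w) (B d d))) _) _.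
  apply: Rplus_le_compat; first exact: HK2.
  by rewrite norm_so_point_sub; apply: Rmult_le_compat_l; lra.
apply: dist_le_weaken (Hsr _ _ _ _ (dist_le_trans (HK1 _ Hk1) Hnear)) _.
- by split => //; exact: HK3.
- by nra.
- by apply: Req_le; field; lra.
Qed.

Lemma outer_so_regular_preimage :
  outer_so_regular S (Ups x) (D x d) ->
  forall (t : nat -> R) (w : nat -> vec n),
    null_pos_seq t ->
    (forall k, preimage Ups S (so_point x (t k) d (w k))) ->
    vec_cv (fun k => vscale (t k) (w k)) (vzero n) ->
    forall eps, 0 < eps -> exists K, forall k, (K <= k)%nat ->
      dist_le (w k) (outer_so_tangent (preimage Ups S) x d) eps.
Proof.
(* The second-order coordinates [v k] of [Ups (x_k)] in [S] are [o(1)]-close to [Ups'(x) w_k + B d d];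
   outer regularity of [S] puts them near [T^2_S], and that distance is pulled back. *)
move=> [_ HSreg] t w Ht Hmem Htw eps Heps.
have HDx := proj1 (HD x).
pose v k := so_coord (Ups x) (t k) (D x d) (Ups (so_point x (t k) d (w k))).
pose u k := vadd (D x (w k)) (B d d).
have Hv k : so_point (Ups x) (t k) (D x d) (v k) = Ups (so_point x (t k) d (w k)).
  by apply: so_point_coord; have := proj1 Ht k; lra.
have Hvu e : 0 < e -> exists K, forall k, (K <= k)%nat -> norm (vsub (v k) (u k)) <= 2 * e.
  move=> He; have [K HK] := so_point_expansion_seq HD HB d Ht Htw He.
  exists K => k Hk; have := HK _ Hk; rewrite -Hv norm_so_point_sub -/(u k).
  have Ht2 : 0 < t k ^ 2 by apply: pow_lt; exact: (proj1 Ht k).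
  by have := norm_ge0 (vsub (v k) (u k)); move=> ? ?; nra.
have Htv : vec_cv (fun k => vscale (t k) (v k)) (vzero m).
  have -> : (fun k => vscale (t k) (v k)) = (fun k => vadd (vscale (t k) (vsub (v k) (u k)))
      (vadd (D x (vscale (t k) (w k))) (vscale (t k) (B d d)))).
    apply: functional_extensionality => k; apply: vec_ext => i.
    by rewrite /vadd /vscale /vsub /u linear_scale // /vadd; ring.
  apply: vec_cv_add0; first exact: (@vec_cv_scale_null _ _ _ (2 * 1) Ht (Hvu 1 Rlt_0_1)).
  apply: vec_cv_add0; first exact: vec_cv_linear0.
  exact: vec_cv_scale_const.
have He2 : 0 < eps / (2 * kappa) by apply: Rdiv_lt_0_compat; lra.
have He4 : 0 < eps / (4 * kappa) by apply: Rdiv_lt_0_compat; lra.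
have [K1 HK1] := HSreg t v Ht (fun k => ltac:(rewrite Hv; exact: Hmem k)) Htv _ He2.
have [K2 HK2] := Hvu _ He4.
exists (maxn K1 K2) => k Hk.
have Hu := dist_le_trans (HK1 _ (leq_trans (leq_maxl _ _) Hk))
  (Rle_trans _ _ _ (Req_le _ _ (norm_vsubC _ _)) (HK2 _ (leq_trans (leq_maxr _ _) Hk))).
have Hr : 0 <= eps / (2 * kappa) + 2 * (eps / (4 * kappa)) by lra.
have := dist_outer_so_tangent_preimage_le Hr Hu.
by have -> : kappa * (eps / (2 * kappa) + 2 * (eps / (4 * kappa))) = eps by field; lra.
Qed.

Lemma outer_so_tangent_preimage w :
  outer_so_tangent (preimage Ups S) x d w ->
  outer_so_tangent S (Ups x) (D x d) (vadd (D x w) (B d d)).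
Proof.
move=> [t [Ht Hw]]; exists t; split => // eps Heps.
have HDx := proj1 (HD x); set CD := linear_bound (D x); have HCD : 0 <= CD := linear_bound_ge0 _.
have [e [He [He1 HeC]]] : exists e, 0 < e /\ e <= 1 /\ e * (2 * CD + 1) <= eps.
  exists (Rmin 1 (eps / (2 * CD + 1))); split; first by apply: Rmin_pos; [lra | apply: Rdiv_lt_0_compat; lra].
  split; first exact: Rmin_l.
  have := Rmult_le_compat_r (2 * CD + 1) _ _ ltac:(lra) (Rmin_r 1 (eps / (2 * CD + 1))).
  by rewrite /Rdiv Rmult_assoc Rinv_l; lra.
have [del [Hdel Hexp]] := so_point_expansion HD HB d He.
have [K1 HK1] := Hw _ He.
have Hw5 : 0 < norm w + 5 by have := norm_ge0 w; lra.
have [K2 HK2] := null_pos_seq_lt Ht (Rdiv_lt_0_compat _ _ Hdel Hw5).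
exists (maxn K1 K2) => k Hk.
have Htk := proj1 Ht k; have Ht2 : 0 < t k ^ 2 by apply: pow_lt.
have Htdel := Rmult_lt_of_lt_div Hw5 (HK2 _ (leq_trans (leq_maxr _ _) Hk)).
have [z [Hz Hnz]] := HK1 _ (leq_trans (leq_maxl _ _) Hk) _ (Rmult_lt_0_compat _ _ He Ht2).
pose w' := so_coord x (t k) d z.
have Ez : so_point x (t k) d w' = z by apply: so_point_coord; lra.
have Hww : norm (vsub w' w) <= 4 * e.
  by move: Hnz; rewrite -Ez norm_vsubC norm_so_point_sub => ?; nra.
have Hw' : norm (vscale (t k) w') < del.
  rewrite norm_scale Rabs_pos_eq; last lra.
  have := norm_vsub_triang w' w (vzero n); rewrite !vsub0 => ?.
  by have := norm_ge0 w'; nra.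
have Htk' : t k < del by have := norm_ge0 w; nra.
have Hexp' := Hexp (t k) w' (conj Htk Htk') Hw'; rewrite Ez in Hexp'.
apply: (dist_le_mem (c := Ups z) Hz).
apply: Rle_trans (norm_vsub_triang _ (so_point (Ups x) (t k) (D x d) (vadd (D x w') (B d d))) _) _.
rewrite norm_so_point_sub (norm_vsubC _ (Ups z)).
have -> : vsub (vadd (D x w) (B d d)) (vadd (D x w') (B d d)) = D x (vsub w w').
  by apply: vec_ext => i; rewrite linear_sub // /vsub /vadd; ring.
have := norm_linear_le (vsub w w') HDx; rewrite -/CD norm_vsubC => HDw.
have : CD * norm (vsub w' w) <= CD * (4 * e) by apply: Rmult_le_compat_l.
by move=> ?; nra.
Qed.

Lemma inner_so_tangent_preimage w :
  inner_so_tangent S (Ups x) (D x d) (vadd (D x w) (B d d)) ->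
  inner_so_tangent (preimage Ups S) x d w.
Proof.
move=> Hin eps Heps.
have He : 0 < eps / (2 * kappa) by apply: Rdiv_lt_0_compat; lra.
have [d1 [Hd1 Hin1]] := Hin _ He.
have [d2 [Hd2 Hexp]] := so_point_expansion HD HB d He.
have [s0 [Hs0 Hsr]] := HSR w.
have Hw1 : 0 < norm w + 1 by have := norm_ge0 w; lra.
have Hd2' : 0 < d2 / (norm w + 1) by apply: Rdiv_lt_0_compat.
exists (Rmin d1 (Rmin s0 (d2 / (norm w + 1)))); split; first by repeat apply: Rmin_pos.
move=> s [Hs Hsmin].
have Hs1 : s < d1 by apply: Rlt_le_trans Hsmin (Rmin_l _ _).
have Hs' : s < Rmin s0 (d2 / (norm w + 1)) by apply: Rlt_le_trans Hsmin (Rmin_r _ _).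
have Hs0' : s < s0 by apply: Rlt_le_trans Hs' (Rmin_l _ _).
have Hsw := Rmult_lt_of_lt_div Hw1 (Rlt_le_trans _ _ _ Hs' (Rmin_r _ _)).
have Hsd2 : s < d2 by have := norm_ge0 w; nra.
have Hnsw : norm (vscale s w) < d2 by rewrite norm_scale Rabs_pos_eq; [nra | lra].
have HS := dist_le_trans (Hin1 s (conj Hs Hs1)) (Hexp s w (conj Hs Hsd2) Hnsw).
apply: dist_le_weaken (Hsr s (conj Hs Hs0') _ _ HS) _.
- by have := pow_lt s 2 Hs; nra.
- by apply: Req_le; field; lra.
Qed.

End Preimage.

Unset Implicit Arguments.

Theorem proposition2p1 (n m : nat) (Ups : vec n -> vec m) (D : vec n -> vec n -> vec m)
    (S : vec m -> Prop) (xbar d : vec n) :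
  closed_vset S ->
  twice_differentiable_with Ups D ->
  S (Ups xbar) ->
  metric_subregular_dir Ups S xbar d ->
  tangent_cone S (Ups xbar) (D xbar d) ->
  (outer_so_regular S (Ups xbar) (D xbar d) -> outer_so_regular (preimage Ups S) xbar d) /\
  (so_regular S (Ups xbar) (D xbar d) -> so_regular (preimage Ups S) xbar d).
Proof.
move=> _ Htwice _ Hsub Htan.
have HD y : is_frechet_deriv Ups y (D y) := proj1 (Htwice y).
have [B HB] := proj2 (Htwice xbar).
have [kappa [Hkappa HSR]] := metric_subregular_dir_so_curves Hsub.
have Houter : outer_so_regular S (Ups xbar) (D xbar d) -> outer_so_regular (preimage Ups S) xbar d.
  move=> HSo; split; first exact: tangent_cone_preimage HD Hkappa HSR Htan.
  exact: outer_so_regular_preimage HD HB Hkappa HSR HSo.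
split => // -[HSo Hiff]; split; first exact: Houter.
move=> w; split; last exact: inner_so_tangent_outer.
move/(outer_so_tangent_preimage HD HB)/Hiff.
exact: (inner_so_tangent_preimage HD HB Hkappa HSR w).
Qed.
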